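(* Let $\mathcal{A}_l\subseteq\mathcal{A}$ be nonempty and $\alpha\in[0,1)$. Consider $$\mathcal{P}(\mathcal{A}_l,\alpha)=\min_{H\succ0}\ -\log\det(H)\quad\text{s.t.}\quad(1-\alpha)a^\top Ha+\alpha\,\mathrm{Tr}(V_{\pi_{\mathrm{off}}}H)\le d\ \ \forall a\in\mathcal{A}_l,$$ and $$\mathcal{D}(\mathcal{A}_l,\alpha)=\max_{\pi\in\Delta(\mathcal{A}_l)}\log\det\big((1-\alpha)V_\pi+\alpha V_{\pi_{\mathrm{off}}}\big).$$ Then $\mathcal{P}(\mathcal{A}_l,\alpha)=\mathcal{D}(\mathcal{A}_l,\alpha)$.
   Context: $\mathcal{A}\subset\mathbb{R}^d$ is a finite set with $\mathrm{span}(\mathcal{A})=\mathbb{R}^d$; $\pi_{\mathrm{off}}\in\Delta(\mathcal{A})$; $\Delta(\mathcal{B})$ is the probability simplex over $\mathcal{B}$; $V_\pi=\sum_a\pi(a)aa^\top$. *)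

From HB Require Import structures.
From mathcomp Require Import all_boot all_order all_algebra.
From mathcomp Require Import all_classical all_reals all_analysis.
Set Implicit Arguments. Unset Strict Implicit. Unset Printing Implicit Defensive.
Import Order.TTheory GRing.Theory Num.Theory.
Local Open Scope ring_scope.
Local Open Scope classical_set_scope.

(* Vectors of R^d are row vectors 'rV[R]_d; a a^T (outer product) is a^T *m a. *)

(* V_pi = sum_a pi(a) a a^T, the action set indexed by 'I_n via a : 'I_n -> 'rV_d *)
Definition Vmat (R : realType) (d n : nat) (a : 'I_n -> 'rV[R]_d)
  (pi : 'I_n -> R) : 'M[R]_d :=
  \sum_(i < n) pi i *: ((a i)^T *m a i).

Definition in_simplex (n : nat) (R : realType) (S : {set 'I_n}) (pi : 'I_n -> R) : Prop :=
  (forall i, 0 <= pi i) /\ (forall i, i \notin S -> pi i = 0) /\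
  \sum_(i < n) pi i = 1.

Definition posdef (R : realType) (d : nat) (H : 'M[R]_d) : Prop :=
  H^T = H /\ forall x : 'rV[R]_d, x != 0 -> 0 < (x *m H *m x^T) 0 0.

(* log det with the convention log det M = -oo when det M <= 0 (singular PSD M) *)
Definition logdetE (R : realType) (d : nat) (M : 'M[R]_d) : \bar R :=
  if 0 < \det M then (ln (\det M))%:E else -oo%E.

Definition primal_feasible (R : realType) (d n : nat) (a : 'I_n -> 'rV[R]_d)
  (pioff : 'I_n -> R) (Al : {set 'I_n}) (alpha : R) (H : 'M[R]_d) : Prop :=
  posdef H /\
  forall i, i \in Al ->
    (1 - alpha) * (a i *m H *m (a i)^T) 0 0 + alpha * \tr (Vmat a pioff *m H)
      <= d%:R.

Definition primal_value (R : realType) (d n : nat) (a : 'I_n -> 'rV[R]_d)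
  (pioff : 'I_n -> R) (Al : {set 'I_n}) (alpha : R) : \bar R :=
  ereal_inf [set ((- ln (\det H))%:E) | H in primal_feasible a pioff Al alpha].

Definition dual_value (R : realType) (d n : nat) (a : 'I_n -> 'rV[R]_d)
  (pioff : 'I_n -> R) (Al : {set 'I_n}) (alpha : R) : \bar R :=
  ereal_sup [set logdetE ((1 - alpha) *: Vmat a pi + alpha *: Vmat a pioff)
            | pi in in_simplex Al].

(* Write M_pi = (1 - alpha) V_pi + alpha V_off.  Weak duality: for feasible H and pi in
   the simplex, averaging the constraints against pi gives tr (M_pi H) <= d; with a
   Cholesky factorisation H = L^T L, det M_pi * det H = det (L M_pi L^T), which is at
   most (tr / d)^d <= 1 by Hadamard's inequality and AM-GM.
   Strong duality: if M is singular at the uniform design on A_l, a kernel vector v is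
   orthogonal to every a in A_l and, when alpha > 0, to the support of pi_off; then
   H = c (1 + s v^T v) is feasible for all s and det H is unbounded, so both values are
   -oo.  Otherwise det M_pi attains a positive maximum on the compact simplex at some
   pi*, and H = M_pi*^-1 is feasible: a violated constraint for a would let det M grow
   when mass moves towards a, because d/dt det (1 + t K) = tr K at t = 0.  This H has
   -log det H = log det M_pi*. *)

From HB Require Import structures.
From mathcomp Require Import all_boot all_order all_algebra.
From mathcomp Require Import all_classical all_reals all_analysis.
From mathcomp Require Import perm ring lra.
Set Implicit Arguments. Unset Strict Implicit. Unset Printing Implicit Defensive.
Import Order.TTheory GRing.Theory Num.Theory.
Import numFieldNormedType.Exports.
Local Open Scope ring_scope.

Section MatrixForm.
Variables (R : realType) (d : nat).
Implicit Types (A B : 'M[R]_d) (u x y z : 'rV[R]_d).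

Definition mxform A x y : R := (x *m A *m y^T) 0 0.

Definition psdmx A := forall x, 0 <= mxform A x x.

Lemma mxformE A x y : mxform A x y = \sum_i \sum_j x 0 i * A i j * y 0 j.
Proof.
rewrite /mxform mxE exchange_big; apply: eq_bigr => j _.
by rewrite mxE mulr_suml; apply: eq_bigr => i _; rewrite !mxE.
Qed.

Lemma sym_mxE A i j : A^T = A -> A j i = A i j.
Proof. by move=> symA; rewrite -[in LHS]symA mxE. Qed.

Lemma mxformC A x y : A^T = A -> mxform A x y = mxform A y x.
Proof.
move=> symA; rewrite !mxformE exchange_big; apply: eq_bigr => i _.
by apply: eq_bigr => j _; rewrite (sym_mxE i j symA); ring.
Qed.

Lemma mxformDl A x y z : mxform A (x + y) z = mxform A x z + mxform A y z.
Proof. by rewrite /mxform !mulmxDl mxE. Qed.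

Lemma mxformDr A x y z : mxform A z (x + y) = mxform A z x + mxform A z y.
Proof. by rewrite /mxform linearD /= mulmxDr mxE. Qed.

Lemma mxformZl A c x y : mxform A (c *: x) y = c * mxform A x y.
Proof. by rewrite /mxform -!scalemxAl mxE. Qed.

Lemma mxformZr A c x y : mxform A x (c *: y) = c * mxform A x y.
Proof. by rewrite /mxform linearZ /= -scalemxAr mxE. Qed.

Lemma mxformD A B x y : mxform (A + B) x y = mxform A x y + mxform B x y.
Proof. by rewrite /mxform mulmxDr mulmxDl mxE. Qed.

Lemma mxformN A x y : mxform (- A) x y = - mxform A x y.
Proof. by rewrite /mxform mulmxN mulNmx mxE. Qed.

Lemma mxformZ A c x y : mxform (c *: A) x y = c * mxform A x y.
Proof. by rewrite /mxform -scalemxAr -scalemxAl mxE. Qed.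

Lemma mxform_sum I (r : seq I) (P : pred I) (F : I -> 'M[R]_d) x y :
  mxform (\sum_(i <- r | P i) F i) x y = \sum_(i <- r | P i) mxform (F i) x y.
Proof.
rewrite /mxform; elim/big_rec2: _ => [|i s M _ <-]; first by rewrite mulmx0 mul0mx mxE.
by rewrite mulmxDr mulmxDl mxE.
Qed.

Lemma mx11_mulE m (u : 'M[R]_(1, m)) (v : 'M[R]_(m, 1)) :
  (u *m v) 0 0 = (v^T *m u^T) 0 0.
Proof. by rewrite -trmx_mul [RHS]mxE. Qed.

Lemma mxform_outer u x y :
  mxform (u^T *m u) x y = (x *m u^T) 0 0 * (y *m u^T) 0 0.
Proof.
rewrite /mxform !mulmxA -(mulmxA (x *m u^T)) mxE big_ord1.
by congr (_ * _); rewrite mx11_mulE trmxK.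
Qed.

Lemma mxform_deltar A x j : mxform A x (delta_mx 0 j) = (x *m A) 0 j.
Proof.
rewrite mxformE mxE; apply: eq_bigr => i _.
rewrite (bigD1 j) //= big1 => [|k /negbTE kj]; last by rewrite !mxE kj andbF mulr0.
by rewrite !mxE !eqxx mulr1 addr0.
Qed.

Lemma mxform_delta A i j : mxform A (delta_mx 0 i) (delta_mx 0 j) = A i j.
Proof. by rewrite mxform_deltar -rowE mxE. Qed.

Lemma psdmx_diag_ge0 A i : psdmx A -> 0 <= A i i.
Proof. by rewrite -mxform_delta. Qed.

Lemma psdmx_cauchy_schwarz A x y : A^T = A -> psdmx A ->
  mxform A x y ^+ 2 <= mxform A x x * mxform A y y.
Proof.
move=> symA psdA; set p := mxform A x x; set q := mxform A y y.
set b := mxform A x y.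
have expand s t : mxform A (s *: x + t *: y) (s *: x + t *: y) =
    s ^+ 2 * p + 2 * s * t * b + t ^+ 2 * q.
  rewrite !(mxformDl, mxformDr, mxformZl, mxformZr) (mxformC y x symA) -/p -/q -/b; ring.
have p0 : 0 <= p by apply: psdA.
have q0 : 0 <= q by apply: psdA.
(* Test the form at q x - b y, and at b x - (p + 1) y for the case q = 0. *)
have h1 := psdA (q *: x + (- b) *: y); rewrite expand in h1.
have h2 := psdA (b *: x + (- (p + 1)) *: y); rewrite expand in h2.
have [qz|qnz] := eqVneq q 0; first by rewrite qz in h2 *; nra.
have qpos : 0 < q by rewrite lt_def qnz q0.
have : 0 <= q * (q * p - b ^+ 2) by nra.
by rewrite pmulr_rge0 // subr_ge0 => h; nra.
Qed.

Lemma psdmx_mulmx_eq0 A x : A^T = A -> psdmx A -> mxform A x x = 0 -> x *m A = 0.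
Proof.
move=> symA psdA xAx0; apply/rowP => j; rewrite -mxform_deltar mxE.
apply/eqP; rewrite -sqrf_eq0 eq_le sqr_ge0 andbT.
by rewrite (le_trans (psdmx_cauchy_schwarz _ _ symA psdA)) // xAx0 mul0r.
Qed.

Lemma mxtrace_outer_mul u A : \tr (u^T *m u *m A) = mxform A u u.
Proof. by rewrite -mulmxA mxtrace_mulC /mxtrace big_ord1. Qed.

Lemma mxtrace_mul_outer A u : \tr (A *m (u^T *m u)) = mxform A u u.
Proof. by rewrite mxtrace_mulC mxtrace_outer_mul. Qed.

Lemma rV_neq0_coord x : x != 0 -> exists i, x 0 i != 0.
Proof.
move=> xn0; apply/existsP; apply: contraNT xn0 => /existsPn x0.
by apply/eqP/rowP => j; rewrite mxE; apply/eqP/negbNE/x0.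
Qed.

Lemma mxform1_gt0 x : x != 0 -> 0 < mxform 1%:M x x.
Proof.
case/rV_neq0_coord=> i xi; rewrite /mxform mulmx1 mxE (bigD1 i) //= mxE -expr2.
have rest_ge0 : 0 <= \sum_(j < d | j != i) x 0 j * x^T j 0.
  by apply: sumr_ge0 => j _; rewrite mxE -expr2 sqr_ge0.
by apply: ltr_pwDl rest_ge0; rewrite lt_def sqrf_eq0 xi sqr_ge0.
Qed.

End MatrixForm.

Section PositiveSemidefinite.
Variables (R : realType) (d : nat).
Implicit Types (A H M : 'M[R]_d).

Lemma cholesky_from m : forall k A, (d - k)%N = m -> A^T = A -> psdmx A ->
  (forall i j : 'I_d, (i < k)%N -> A i j = 0) ->
  exists l : 'I_d -> 'rV[R]_d,
    [/\ forall j i : 'I_d, (i < j)%N -> l j 0 i = 0,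
        forall j : 'I_d, (j < k)%N -> l j = 0 &
        A = \sum_j (l j)^T *m l j].
Proof.
elim: m => [|m IH] k A dk symA psdA Ak0.
  have A0 : A = 0.
    by apply/matrixP => i j; rewrite mxE Ak0 // (leq_trans (ltn_ord i)) -?subn_eq0 ?dk.
  exists (fun=> 0); split=> [j i _|//|]; first by rewrite mxE.
  by rewrite A0 big1 // => j _; rewrite mulmx0.
have kd : (k < d)%N by rewrite -subn_gt0 dk.
have dk1 : (d - k.+1)%N = m by rewrite subnS dk.
pose p := Ordinal kd.
have Ak0' (i j : 'I_d) : (j < k)%N -> A i j = 0 by move=> jk; rewrite -sym_mxE // Ak0.
have [App0|Appn0] := eqVneq (A p p) 0.
  have Ap0 j : A p j = 0.
    apply/eqP; rewrite -sqrf_eq0 eq_le sqr_ge0 andbT.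
    have := psdmx_cauchy_schwarz (delta_mx 0 p) (delta_mx 0 j) symA psdA.
    by rewrite !mxform_delta App0 mul0r.
  have Ak1 (i j : 'I_d) : (i < k.+1)%N -> A i j = 0.
    rewrite ltnS leq_eqVlt => /orP[/eqP ik|]; last exact: Ak0.
    by have -> : i = p by apply: val_inj.
  have [l [ltri lk Al]] := IH k.+1 A dk1 symA psdA Ak1.
  by exists l; split=> // j jk; apply: lk; apply: ltnW.
have Appgt0 : 0 < A p p by rewrite lt_def Appn0 psdmx_diag_ge0.
(* Pivot on row p: subtract the rank-one term v^T v that clears row and column p. *)
pose s := (Num.sqrt (A p p))^-1.
have s2 : s ^+ 2 = (A p p)^-1 by rewrite exprVn sqr_sqrtr // ltW.
pose v : 'rV[R]_d := s *: row p A.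
have vE i : v 0 i = s * A p i by rewrite !mxE.
pose A' := A - v^T *m v.
have A'E i j : A' i j = A i j - s ^+ 2 * A p i * A p j.
  by rewrite !mxE big_ord1 !mxE; ring.
have symA' : A'^T = A' by rewrite linearB /= trmx_mul trmxK symA.
have psdA' : psdmx A'.
  move=> x; rewrite mxformD mxformN mxform_outer.
  have -> : (x *m v^T) 0 0 = s * mxform A x (delta_mx 0 p).
    rewrite mxform_deltar linearZ /= -scalemxAr mxE mx11_mulE trmxK.
    rewrite !mxE; congr (_ * _); apply: eq_bigr => i _.
    by rewrite !mxE mulrC (sym_mxE _ _ symA).
  have := psdmx_cauchy_schwarz x (delta_mx 0 p) symA psdA; rewrite mxform_delta.
  rewrite subr_ge0 mulrACA -expr2 s2 -(ler_pM2r Appgt0) mulrAC mulVf ?mul1r //.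
have A'k1 (i j : 'I_d) : (i < k.+1)%N -> A' i j = 0.
  rewrite ltnS leq_eqVlt => /orP[/eqP ik|ik]; last first.
    by rewrite A'E Ak0 // (sym_mxE _ _ symA) Ak0 // mulr0 mul0r subr0.
  have -> : i = p by apply: val_inj.
  by rewrite A'E s2 mulVf // mul1r subrr.
have [l [ltri lk Al]] := IH k.+1 A' dk1 symA' psdA' A'k1.
exists (fun j => if j == p then v else l j); split.
- move=> j i ij; case: eqP => [jp|_]; last exact: ltri.
  by rewrite vE Ak0' ?mulr0 //; rewrite jp in ij.
- move=> j jk; case: eqP => [jp|_]; first by rewrite jp ltnn in jk.
  by apply: lk; apply: ltnW.
- rewrite (bigD1 p) //= eqxx (eq_bigr (fun j => (l j)^T *m l j)) => [|j /negbTE -> //].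
  have lp : l p = 0 by apply: lk.
  by rewrite -[A](subrK (v^T *m v)) -/A' Al (bigD1 p) //= lp mulmx0 add0r addrC.
Qed.

Lemma cholesky A : A^T = A -> psdmx A ->
  exists L : 'M[R]_d, [/\ A = L^T *m L, is_trig_mx L^T & forall i, L i i ^+ 2 <= A i i].
Proof.
move=> symA psdA.
have no_zero_rows (i j : 'I_d) : (i < 0)%N -> A i j = 0 by [].
have [l [ltri _ Al]] := cholesky_from (subn0 d) symA psdA no_zero_rows.
pose L := \matrix_(j, i) l j 0 i.
have AE : A = L^T *m L.
  rewrite Al; apply/matrixP => i j; rewrite summxE !mxE.
  by apply: eq_bigr => k _; rewrite !mxE big_ord1 !mxE.
exists L; split=> //; first by apply/is_trig_mxP => i j ij; rewrite !mxE ltri.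
move=> i; rewrite AE [X in _ <= X]mxE (bigD1 i) //= [L^T i i]mxE -expr2 lerDl.
by apply: sumr_ge0 => j _; rewrite [L^T i j]mxE -expr2 sqr_ge0.
Qed.

Lemma psdmx_det_ge0 A : A^T = A -> psdmx A -> 0 <= \det A.
Proof.
move=> symA psdA; have [L [-> _ _]] := cholesky symA psdA.
by rewrite det_mulmx det_tr -expr2 sqr_ge0.
Qed.

Lemma psdmx_det_le_prod_diag A : A^T = A -> psdmx A -> \det A <= \prod_i A i i.
Proof.
move=> symA psdA; have [L [AE trigL LA]] := cholesky symA psdA.
rewrite {1}AE det_mulmx -[\det L]det_tr det_trig // -big_split /=.
by apply: ler_prod => i _; rewrite mxE -expr2 sqr_ge0 LA.
Qed.

Lemma psdmx_det_le1 A : A^T = A -> psdmx A -> \tr A <= d%:R -> \det A <= 1.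
Proof.
move=> symA psdA trA; apply: le_trans (psdmx_det_le_prod_diag symA psdA) _.
have diag_ge0 : {in predT, forall i, 0 <= A i i} by move=> i _; exact: psdmx_diag_ge0.
apply: le_trans (leif_AGM diag_ge0).1 _; rewrite cardT size_enum_ord.
case: d A symA psdA trA diag_ge0 => [|d'] A _ _ trA diag_ge0; first by rewrite expr0.
apply: exprn_ile1; first by rewrite divr_ge0 ?sumr_ge0.
by rewrite ler_pdivrMr ?ltr0Sn // mul1r.
Qed.

Lemma posdef_psdmx H : posdef H -> psdmx H.
Proof.
move=> [_ Hpos] x; have [->|xn0] := eqVneq x 0; last exact/ltW/Hpos.
by rewrite /mxform !mul0mx mxE.
Qed.

Lemma posdef_det_gt0 H : posdef H -> 0 < \det H.
Proof.
move=> pdH; have [symH Hpos] := pdH.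
have psdH := posdef_psdmx pdH.
rewrite lt_def psdmx_det_ge0 // andbT.
apply/negP => /det0P [v vn0 vH].
by have := Hpos v vn0; rewrite vH mul0mx mxE ltxx.
Qed.

Lemma posdef1 : posdef (1%:M : 'M[R]_d).
Proof. by split=> [|x /mxform1_gt0]; rewrite ?trmx1. Qed.

Lemma posdef_invmx M : M^T = M -> psdmx M -> 0 < \det M -> posdef (invmx M).
Proof.
move=> symM psdM detM; have Mu : M \in unitmx by rewrite unitmxE unitfE gt_eqF.
split=> [|x xn0]; first by rewrite trmx_inv symM.
set y := x *m invmx M.
have xE : x = y *m M by rewrite mulmxKV.
have yn0 : y != 0 by apply: contraNneq xn0 => y0; rewrite xE y0 mul0mx.
have -> : (x *m invmx M *m x^T) 0 0 = mxform M y y.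
  by rewrite -/y [in LHS]xE trmx_mul symM /mxform mulmxA.
rewrite lt_def psdM andbT; apply: contraNneq xn0 => /(psdmx_mulmx_eq0 symM psdM).
by rewrite xE => ->.
Qed.

(* If H = L^T L, then det M det H = det (L M L^T) and tr (L M L^T) = tr (M H). *)
Lemma det_mul_le1 M H : M^T = M -> psdmx M -> posdef H ->
  \tr (M *m H) <= d%:R -> \det M * \det H <= 1.
Proof.
move=> symM psdM pdH trMH; have [symH _] := pdH.
have [L [HE _ _]] := cholesky symH (posdef_psdmx pdH).
pose B := L *m M *m L^T.
have symB : B^T = B by rewrite !trmx_mul trmxK symM mulmxA.
have psdB : psdmx B by move=> x; have := psdM (x *m L); rewrite /mxform trmx_mul !mulmxA.
have trB : \tr B = \tr (M *m H) by rewrite mxtrace_mulC mulmxA -HE mxtrace_mulC.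
have := psdmx_det_le1 symB psdB; rewrite trB => /(_ trMH).
by rewrite HE !det_mulmx det_tr mulrCA mulrA.
Qed.

Lemma posdef_scale_1_add_outer c s (v : 'rV[R]_d) : 0 < c -> 0 <= s ->
  posdef (c *: (1%:M + s *: (v^T *m v))).
Proof.
move=> c_gt0 s_ge0; split=> [|x xn0].
  by rewrite linearZ linearD linearZ /= trmx1 trmx_mul trmxK.
rewrite -/(mxform _ x x) mxformZ mxformD mxformZ mxform_outer mulr_gt0 //.
by rewrite -expr2; apply: ltr_pwDl (mxform1_gt0 xn0) (mulr_ge0 s_ge0 (sqr_ge0 _)).
Qed.

End PositiveSemidefinite.

Section DeterminantPerturbation.
Variable R : realType.

Lemma det_1_add_outer d (u w : 'rV[R]_d) : \det (1%:M + u^T *m w) = 1 + (w *m u^T) 0 0.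
Proof.
pose P1 : 'M[R]_(d + 1) := block_mx 1%:M 0 (- w) 1%:M.
pose P2 : 'M[R]_(d + 1) := block_mx 1%:M u^T 0 (1%:M + w *m u^T).
pose Q : 'M[R]_(d + 1) := block_mx (1%:M + u^T *m w) u^T 0 1%:M.
have E : P1 *m P2 = Q *m P1.
  rewrite !mulmx_block !(mul1mx, mulmx1, mul0mx, mulmx0, addr0, add0r) mulmxN mulNmx.
  by congr block_mx; rewrite ?addrK // addrC addrK.
have := congr1 determinant E.
rewrite !det_mulmx det_lblock !det_ublock !det1 !mul1r !mulr1 det_mx11 => <-.
by rewrite !mxE eqxx.
Qed.

(* det (1 + t K) = t^(d+1) chi_{-K}(1/t), whose top coefficients are 1 and tr K. *)
Lemma det_1_addZ_lower_bound d (K : 'M[R]_d.+1) : exists2 C, 0 <= C &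
  forall t, 0 < t <= 1 -> 1 + t * \tr K - t ^+ 2 * C <= \det (1%:M + t *: K).
Proof.
set p := char_poly (- K).
have pE (x : R) : p.[x] = \det (x%:M + K).
  rewrite /p /char_poly -horner_evalE -det_map_mx; congr (\det _).
  apply/matrixP => i j; rewrite !mxE.
  by rewrite raddfB raddfMn /= !horner_evalE hornerX hornerC opprK.
have sp : size p = d.+2 by rewrite size_char_poly.
have p_lead : p`_d.+1 = 1.
  by have := char_poly_monic (- K); rewrite monicE lead_coefE sp => /eqP.
have p_next : p`_d = \tr K by rewrite (char_poly_trace (- K)) //= linearN /= opprK.
exists (\sum_(i < d) `|p`_i|); first exact: sumr_ge0.
move=> t /andP[t0 t1]; have tn0 : t != 0 by rewrite gt_eqF.
have -> : \det (1%:M + t *: K) = t ^+ d.+1 * p.[t^-1].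
  by rewrite pE -detZ scalerDr scale_scalar_mx mulfV.
rewrite horner_coef sp !big_ord_recr /= p_lead p_next !mulrDr.
have -> : t ^+ d.+1 * (1 * t^-1 ^+ d.+1) = 1 by rewrite mul1r exprVn mulfV ?expf_neq0.
have -> : t ^+ d.+1 * (\tr K * t^-1 ^+ d) = t * \tr K.
  by rewrite exprVn exprS; field; rewrite expf_neq0.
suff : - (t ^+ 2 * \sum_(i < d) `|p`_i|) <= t ^+ d.+1 * \sum_(i < d) p`_i * t^-1 ^+ i.
  lra.
rewrite mulr_sumr -sumrN mulr_sumr; apply: ler_sum => i _.
have id : (i <= d)%N by rewrite ltnW.
have -> : t ^+ d.+1 * (p`_i * t^-1 ^+ i) = p`_i * t ^+ (d.+1 - i).
  by rewrite expfB ?ltnS // exprVn mulrCA.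
have tpow_le : t ^+ (d.+1 - i) <= t ^+ 2.
  rewrite -(subnKC (_ : 2 <= d.+1 - i)%N) ?ltn_subRL ?addn1 ?ltnS // exprD.
  by rewrite ler_piMr ?exprn_ge0 ?exprn_ile1 // ltW.
have tpow_ge0 : 0 <= t ^+ (d.+1 - i) by rewrite exprn_ge0 // ltW.
apply: le_trans (_ : - (`|p`_i| * t ^+ (d.+1 - i)) <= _).
  by rewrite lerN2 mulrC ler_wpM2r.
rewrite lerNl; apply: le_trans (ler_norm _) _.
by rewrite normrN normrM (ger0_norm tpow_ge0).
Qed.

Lemma det_1_addZ_gt1 d (K : 'M[R]_d) : 0 < \tr K ->
  exists2 t, 0 < t <= 1 & 1 < \det (1%:M + t *: K).
Proof.
case: d K => [|d] K trK; first by rewrite /mxtrace big_ord0 ltxx in trK.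
have [C C0 lowerK] := det_1_addZ_lower_bound K.
set T := \tr K in trK lowerK.
pose t := T / (T + C + 1).
have tpos : 0 < t by rewrite divr_gt0 //; lra.
have t1 : t <= 1 by rewrite ler_pdivrMr ?mul1r; lra.
have tC : t * C < T by rewrite mulrAC ltr_pdivrMr; nra.
exists t; first by rewrite tpos t1.
by apply: lt_le_trans (lowerK t _); [nra | rewrite tpos t1].
Qed.

Lemma det_scale_1_add_outer d c s (v : 'rV[R]_d) :
  \det (c *: (1%:M + s *: (v^T *m v))) = c ^+ d * (1 + s * mxform 1%:M v v).
Proof.
have -> : s *: (v^T *m v) = (s *: v)^T *m v by rewrite linearZ /= scalemxAl.
by rewrite detZ det_1_add_outer linearZ /= -scalemxAr mxE /mxform mulmx1.
Qed.

End DeterminantPerturbation.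

Section Continuity.
Variables (R : realType) (T : topologicalType).

Lemma continuous_sum I (r : seq I) (P : pred I) (F : I -> T -> R) :
  (forall i, continuous (F i)) -> continuous (fun x => \sum_(i <- r | P i) F i x).
Proof.
move=> Fcont; rewrite -fct_sumE; apply: (big_ind (fun f : T -> R => continuous f)).
- exact: cst_continuous.
- by move=> f g fc gc x; exact: continuousD (fc x) (gc x).
- by move=> i _; apply: Fcont.
Qed.

Lemma continuous_prod I (r : seq I) (P : pred I) (F : I -> T -> R) :
  (forall i, continuous (F i)) -> continuous (fun x => \prod_(i <- r | P i) F i x).
Proof.
move=> Fcont; rewrite -fct_prodE; apply: (big_ind (fun f : T -> R => continuous f)).
- exact: cst_continuous.
- by move=> f g fc gc x; exact: continuousM (fc x) (gc x).
- by move=> i _; apply: Fcont.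
Qed.

Lemma continuous_mull (c : R) (f : T -> R) :
  continuous f -> continuous (fun x => c * f x).
Proof.
move=> fc; have -> : (fun x => c * f x) = (fun=> c) \* f by [].
by move=> x; apply: continuousM; [exact: cst_continuous | exact: fc].
Qed.

Lemma continuous_addr (f : T -> R) (b : R) :
  continuous f -> continuous (fun x => f x + b).
Proof.
move=> fc; have -> : (fun x => f x + b) = f + (fun=> b) by [].
by move=> x; apply: continuousD; [exact: fc | exact: cst_continuous].
Qed.

Lemma continuous_det d (G : T -> 'M[R]_d) :
  (forall i j, continuous (fun x => G x i j)) -> continuous (fun x => \det (G x)).
Proof.
move=> Gcont; apply: continuous_sum => s; apply: continuous_mull.
by apply: continuous_prod => i; apply: Gcont.
Qed.

End Continuity.

Section Simplex.
Context {R : realType} {n : nat} (S : {set 'I_n}).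
Local Open Scope classical_set_scope.

Lemma in_simplex_delta i : i \in S -> in_simplex S (fun j => (j == i)%:R : R).
Proof.
move=> iS; split; [by move=> j; rewrite ler0n | split].
  by move=> j jS; case: eqP jS => // ->; rewrite iS.
by rewrite (bigD1 i) //= eqxx big1 ?addr0 // => j /negbTE ->.
Qed.

Lemma in_simplex_convex (p q : 'I_n -> R) t : in_simplex S p -> in_simplex S q ->
  0 <= t <= 1 -> in_simplex S (fun j => (1 - t) * p j + t * q j).
Proof.
move=> [p0 [pS p1]] [q0 [qS q1]] /andP[t0 t1]; split; [|split].
- by move=> j; rewrite addr_ge0 ?mulr_ge0 ?subr_ge0.
- by move=> j jS; rewrite pS ?qS // !mulr0 addr0.
- by rewrite big_split /= -!mulr_sumr p1 q1 !mulr1 subrK.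
Qed.

Definition uniform_on : 'I_n -> R := fun i => if i \in S then #|S|%:R^-1 else 0.

Lemma uniform_on_gt0 i : i \in S -> 0 < uniform_on i.
Proof. by move=> iS; rewrite /uniform_on iS invr_gt0 ltr0n card_gt0; apply/set0Pn; exists i. Qed.

Lemma in_simplex_uniform_on : S != finset.set0 -> in_simplex S uniform_on.
Proof.
move=> S0; split; [|split].
- by move=> i; rewrite /uniform_on; case: ifP => // _; rewrite invr_ge0 ler0n.
- by move=> i /negbTE iS; rewrite /uniform_on iS.
- rewrite -big_mkcond /= sumr_const -[RHS](@mulVf _ #|S|%:R) ?mulr_natr //.
  by rewrite pnatr_eq0 -lt0n card_gt0.
Qed.

Definition simplex_rV : set 'rV[R]_n := [set v | in_simplex S (fun i => v 0 i)].

Lemma closed_simplex_rV : closed simplex_rV.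
Proof.
have coord_closed (f : 'rV[R]_n -> R) (A : set R) :
    continuous f -> closed A -> closed (f @^-1` A).
  by move=> fc; apply: (continuous_closedP f).1.
have -> : simplex_rV =
    \bigcap_i [set v | 0 <= v 0 i] `&`
    (\bigcap_(i in [set i | i \notin S]) [set v | v 0 i = 0] `&`
     [set v | \sum_i v 0 i = 1]).
  apply/seteqP; split=> v [v_ge0 [v_out v_sum]].
    by split; [move=> i _; apply: v_ge0 | split=> // i; apply: v_out].
  by split; [move=> i; apply: v_ge0 | split=> // i; apply: v_out].
apply: closedI; [|apply: closedI].
- apply: closed_bigI => i _; apply: (coord_closed (fun v => v 0 i) [set x | 0 <= x]).
    exact: coord_continuous.
  exact: closed_ge.
- apply: closed_bigI => i _; apply: (coord_closed (fun v => v 0 i) [set x | x = 0]).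
    exact: coord_continuous.
  exact: closed_eq.
- apply: (coord_closed (fun v => \sum_i v 0 i) [set x | x = 1]); last exact: closed_eq.
  by apply: continuous_sum => i; apply: coord_continuous.
Qed.

Lemma compact_simplex_rV : compact simplex_rV.
Proof.
apply: (subclosed_compact closed_simplex_rV
  (@rV_compact R n (fun=> `[0%R, 1%R]) (fun=> @segment_compact R 0 1))).
move=> v [v_ge0 [_ v_sum1]] i /=; rewrite in_itv /= v_ge0 -v_sum1.
by rewrite (bigD1 i) //= lerDl sumr_ge0.
Qed.

Lemma simplex_argmax (F : ('I_n -> R) -> R) :
  continuous (fun v : 'rV[R]_n => F (fun i => v 0 i)) ->
  (exists p : 'I_n -> R, in_simplex S p) ->
  exists2 p : 'I_n -> R, in_simplex S p & forall q, in_simplex S q -> F q <= F p.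
Proof.
move=> Fcont [p0 p0S].
have rowK (q : 'I_n -> R) : (fun i => (\row_j q j) 0 i) = q.
  by apply/funext => i; rewrite mxE.
have S0 : simplex_rV !=set0 by exists (\row_i p0 i); rewrite /simplex_rV /= rowK.
have [c cS cmax] := EVT_max_rV S0 compact_simplex_rV (continuous_subspaceT Fcont).
exists (fun i => c 0 i); first by move: cS; rewrite inE.
move=> q qS; rewrite -[q]rowK; apply: cmax.
by rewrite inE /simplex_rV /= rowK.
Qed.

End Simplex.

Section DesignMatrix.
Variables (R : realType) (d n : nat) (a : 'I_n -> 'rV[R]_d).
Implicit Types (p q : 'I_n -> R).

Lemma Vmat_sym p : (Vmat a p)^T = Vmat a p.
Proof.
rewrite /Vmat linear_sum; apply: eq_bigr => i _.
by rewrite linearZ /= trmx_mul trmxK.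
Qed.

Lemma mxform_Vmat p x : mxform (Vmat a p) x x = \sum_j p j * (x *m (a j)^T) 0 0 ^+ 2.
Proof. by rewrite mxform_sum; apply: eq_bigr => j _; rewrite mxformZ mxform_outer expr2. Qed.

Lemma Vmat_psd p : (forall i, 0 <= p i) -> psdmx (Vmat a p).
Proof.
by move=> p0 x; rewrite mxform_Vmat; apply: sumr_ge0 => j _; rewrite mulr_ge0 ?sqr_ge0.
Qed.

Lemma mxtrace_Vmat_mul p H : \tr (Vmat a p *m H) = \sum_i p i * mxform H (a i) (a i).
Proof.
rewrite /Vmat mulmx_suml raddf_sum; apply: eq_bigr => i _.
by rewrite /= -scalemxAl mxtraceZ mxtrace_outer_mul.
Qed.

Lemma Vmat_convex p q t :
  Vmat a (fun j => (1 - t) * p j + t * q j) = (1 - t) *: Vmat a p + t *: Vmat a q.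
Proof.
rewrite /Vmat !scaler_sumr -big_split; apply: eq_bigr => j _.
by rewrite /= !scalerA -scalerDl.
Qed.

End DesignMatrix.

Section Duality.
Variables (R : realType) (d n : nat) (a : 'I_n -> 'rV[R]_d) (pioff : 'I_n -> R).
Variables (Al : {set 'I_n}) (alpha : R).
Hypotheses (pioff_dist : in_simplex [set: 'I_n] pioff)
  (alpha_ge0 : 0 <= alpha) (alpha_lt1 : alpha < 1).
Implicit Types (p q : 'I_n -> R) (H : 'M[R]_d).

Definition Vmix p := (1 - alpha) *: Vmat a p + alpha *: Vmat a pioff.

Definition primal_constraint H i :=
  (1 - alpha) * mxform H (a i) (a i) + alpha * \tr (Vmat a pioff *m H).

Lemma pioff_ge0 i : 0 <= pioff i. Proof. by case: pioff_dist. Qed.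

Lemma Vmix_sym p : (Vmix p)^T = Vmix p.
Proof. by rewrite linearD !linearZ /= !Vmat_sym. Qed.

Lemma Vmix_psd p : (forall i, 0 <= p i) -> psdmx (Vmix p).
Proof.
move=> p0 x; have alpha1 : 0 <= 1 - alpha by rewrite subr_ge0 ltW.
rewrite mxformD !mxformZ addr_ge0 ?mulr_ge0 //.
  exact: (Vmat_psd a p0 x).
exact: (Vmat_psd a pioff_ge0 x).
Qed.

Lemma Vmix_det_ge0 p : (forall i, 0 <= p i) -> 0 <= \det (Vmix p).
Proof. by move=> p0; apply: psdmx_det_ge0 (Vmix_sym p) (Vmix_psd p0). Qed.

Lemma mxtrace_Vmix_mul p H : \sum_i p i = 1 ->
  \tr (Vmix p *m H) = \sum_i p i * primal_constraint H i.
Proof.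
move=> p1; rewrite mulmxDl -!scalemxAl mxtraceD !mxtraceZ mxtrace_Vmat_mul.
rewrite /primal_constraint mulr_sumr -[X in _ + X]mul1r -p1 mulr_suml -big_split /=.
by apply: eq_bigr => i _; ring.
Qed.

Lemma mxtrace_Vmix_delta_mul i H :
  \tr (Vmix (fun j => (j == i)%:R) *m H) = primal_constraint H i.
Proof.
rewrite mxtrace_Vmix_mul; last by rewrite (bigD1 i) //= eqxx big1 ?addr0 // => j /negbTE ->.
by rewrite (bigD1 i) //= eqxx mul1r big1 ?addr0 // => j /negbTE ->; rewrite mul0r.
Qed.

Lemma Vmix_convex p q t :
  Vmix (fun j => (1 - t) * p j + t * q j) = (1 - t) *: Vmix p + t *: Vmix q.
Proof.
rewrite /Vmix Vmat_convex !scalerDr !scalerA.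
apply/matrixP => i j; rewrite !mxE; ring.
Qed.

Lemma logdetE_Vmix_le_primal p H : in_simplex Al p ->
  primal_feasible a pioff Al alpha H -> (logdetE (Vmix p) <= (- ln (\det H))%:E)%E.
Proof.
move=> [p0 [pAl p1]] [pdH Hcon]; have detH := posdef_det_gt0 pdH.
have trVH : \tr (Vmix p *m H) <= d%:R.
  rewrite mxtrace_Vmix_mul //; apply: (@le_trans _ _ (\sum_i p i * d%:R)).
    apply: ler_sum => i _; have [iAl|iAl] := boolP (i \in Al).
      by rewrite ler_wpM2l //; exact: (Hcon i iAl).
    by rewrite pAl // !mul0r.
  by rewrite -mulr_suml p1 mul1r.
have := det_mul_le1 (Vmix_sym p) (Vmix_psd p0) pdH trVH.
rewrite /logdetE; case: ifP => [detV|_ _]; last exact: leNye.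
by move=> le1; rewrite lee_fin -subr_le0 opprK -lnM ?posrE // ln_le0.
Qed.

Lemma dual_value_le_primal_value :
  (dual_value a pioff Al alpha <= primal_value a pioff Al alpha)%E.
Proof.
apply: ge_ereal_sup => _ [p pAl <-]; apply: le_ereal_inf_tmp => _ [H feasH <-].
exact: logdetE_Vmix_le_primal.
Qed.

Lemma primal_constraint_ge0 H i : psdmx H -> 0 <= primal_constraint H i.
Proof.
move=> psdH; rewrite /primal_constraint mxtrace_Vmat_mul.
have trace_ge0 : 0 <= \sum_j pioff j * mxform H (a j) (a j).
  by apply: sumr_ge0 => j _; rewrite mulr_ge0 ?pioff_ge0 ?(psdH (a j)).
by rewrite addr_ge0 ?mulr_ge0 ?(psdH (a i)) // subr_ge0 ltW.
Qed.

Lemma Vmix_kernel p v : in_simplex Al p -> (forall i, i \in Al -> 0 < p i) ->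
  v *m Vmix p = 0 ->
  (forall i, i \in Al -> (v *m (a i)^T) 0 0 = 0) /\ alpha * mxform (Vmat a pioff) v v = 0.
Proof.
move=> [p0 _] pAl_gt0 vV0; have alpha1 : 0 < 1 - alpha by rewrite subr_gt0.
have form0 : (1 - alpha) * mxform (Vmat a p) v v + alpha * mxform (Vmat a pioff) v v = 0.
  by rewrite -!mxformZ -mxformD /mxform vV0 mul0mx mxE.
have pterm := mulr_ge0 (ltW alpha1) (Vmat_psd a p0 v).
have offterm := mulr_ge0 alpha_ge0 (Vmat_psd a pioff_ge0 v).
split; last by lra.
have : mxform (Vmat a p) v v = 0.
  have : (1 - alpha) * mxform (Vmat a p) v v = 0 by lra.
  by move/eqP; rewrite mulf_eq0 gt_eqF //= => /eqP.
rewrite mxform_Vmat => /eqP; rewrite psumr_eq0 => [/allP vanish i iAl|j _]; last first.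
  by rewrite mulr_ge0 ?sqr_ge0.
have := vanish i (mem_index_enum i).
by rewrite mulf_eq0 sqrf_eq0 gt_eqF ?pAl_gt0 //= => /eqP.
Qed.

(* Along a direction v orthogonal to every active design, H = c (1 + s v^T v) stays
   feasible for a suitable c while det H grows without bound in s. *)
Lemma primal_unbounded v : v != 0 -> (forall i, i \in Al -> (v *m (a i)^T) 0 0 = 0) ->
  alpha * mxform (Vmat a pioff) v v = 0 ->
  forall r, exists2 H, primal_feasible a pioff Al alpha H & - ln (\det H) <= r.
Proof.
move=> vn0 vAl vpioff r.
have [i0 _] := rV_neq0_coord vn0.
have d_ge1 : 1 <= d%:R :> R by rewrite ler1n (leq_ltn_trans _ (ltn_ord i0)).
have psd1 : psdmx (1%:M : 'M[R]_d) := posdef_psdmx (posdef1 R d).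
have cons1_ge0 i : 0 <= primal_constraint 1%:M i := primal_constraint_ge0 i psd1.
have den_gt0 : 0 < 1 + \sum_i primal_constraint 1%:M i by rewrite ltr_pwDl ?sumr_ge0.
pose c := (1 + \sum_i primal_constraint 1%:M i)^-1.
have c_gt0 : 0 < c by rewrite invr_gt0.
pose N := mxform 1%:M v v; have N_gt0 : 0 < N := mxform1_gt0 vn0.
pose s := expR (- r) / (c ^+ d * N).
have s_ge0 : 0 <= s by rewrite divr_ge0 ?mulr_ge0 ?exprn_ge0 ?expR_ge0 // ltW.
pose H := c *: (1%:M + s *: (v^T *m v)).
have formH x : mxform H x x = c * (mxform 1%:M x x + s * (x *m v^T) 0 0 ^+ 2).
  by rewrite mxformZ mxformD mxformZ mxform_outer expr2.
have pdH : posdef H := posdef_scale_1_add_outer v c_gt0 s_ge0.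
have detH : \det H = c ^+ d + expR (- r).
  by rewrite det_scale_1_add_outer -/N /s; field; rewrite !gt_eqF ?exprn_gt0.
exists H.
  split=> // i iAl; change (primal_constraint H i <= d%:R).
  have -> : primal_constraint H i = c * primal_constraint 1%:M i.
    rewrite /primal_constraint formH mx11_mulE trmxK vAl // mulmx1.
    rewrite -scalemxAr mxtraceZ mulmxDr -scalemxAr mxtraceD mxtraceZ mulmx1 mxtrace_mul_outer.
    rewrite expr0n /= mulr0 addr0.
    have -> : alpha * (c * (\tr (Vmat a pioff) + s * mxform (Vmat a pioff) v v)) =
      c * (alpha * \tr (Vmat a pioff)) + c * s * (alpha * mxform (Vmat a pioff) v v).
      by ring.
    by rewrite vpioff mulr0 addr0; ring.
  apply: le_trans d_ge1; rewrite mulrC ler_pdivrMr // mul1r (bigD1 i) //=.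
  have : 0 <= \sum_(j | j != i) primal_constraint 1%:M j by apply: sumr_ge0.
  lra.
rewrite lerNl -[- r]expRK ler_ln ?posrE ?expR_gt0 ?detH ?lerDr ?exprn_ge0 ?ltW //.
by rewrite -detH; exact: posdef_det_gt0.
Qed.

Lemma primal_value_ninfty : Al != finset.set0 ->
  \det (Vmix (uniform_on Al)) = 0 -> primal_value a pioff Al alpha = -oo%E.
Proof.
move=> Al0 /eqP/det0P [v vn0 vV0].
have [vAl vpioff] :=
  Vmix_kernel (in_simplex_uniform_on Al0) (@uniform_on_gt0 R _ Al) vV0.
apply: eq_ninfty => r; have [H feasH detH] := primal_unbounded vn0 vAl vpioff r.
by apply: ge_ereal_inf; exists (- ln (\det H))%:E; [exists H | rewrite lee_fin].
Qed.

(* First-order optimality: if the constraint for i failed at H = V^-1, shifting mass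
   towards i would multiply det V by det (1 + t (V_i V^-1 - 1)) > 1. *)
Lemma invmx_Vmix_feasible ps : in_simplex Al ps -> 0 < \det (Vmix ps) ->
  (forall q, in_simplex Al q -> \det (Vmix q) <= \det (Vmix ps)) ->
  primal_feasible a pioff Al alpha (invmx (Vmix ps)).
Proof.
move=> psAl detV psmax; have [ps0 _] := psAl.
have Vu : Vmix ps \in unitmx by rewrite unitmxE unitfE gt_eqF.
split; first exact: posdef_invmx (Vmix_sym ps) (Vmix_psd ps0) detV.
move=> i iAl; rewrite leNgt; apply/negP => violated.
pose K := Vmix (fun j => (j == i)%:R) *m invmx (Vmix ps) - 1%:M.
have trK : 0 < \tr K by rewrite raddfB /= mxtrace1 mxtrace_Vmix_delta_mul subr_gt0.
have [t /andP[t_gt0 t_le1] det_gt1] := det_1_addZ_gt1 trK.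
pose q j := (1 - t) * ps j + t * (j == i)%:R.
have qAl : in_simplex Al q.
  by apply: in_simplex_convex psAl (in_simplex_delta iAl) _; rewrite ltW.
have Vq : Vmix q = (1%:M + t *: K) *m Vmix ps.
  rewrite Vmix_convex mulmxDl mul1mx -scalemxAl mulmxBl mul1mx mulmxKV //.
  by apply/matrixP => k l; rewrite !mxE; ring.
have := psmax q qAl; rewrite Vq det_mulmx -[leRHS]mul1r ler_pM2r //.
by rewrite leNgt det_gt1.
Qed.

Lemma primal_value_le_logdetE ps : in_simplex Al ps -> 0 < \det (Vmix ps) ->
  (forall q, in_simplex Al q -> \det (Vmix q) <= \det (Vmix ps)) ->
  (primal_value a pioff Al alpha <= logdetE (Vmix ps))%E.
Proof.
move=> psAl detV psmax; apply: ge_ereal_inf.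
exists (- ln (\det (invmx (Vmix ps))))%:E.
  by exists (invmx (Vmix ps)) => //; exact: invmx_Vmix_feasible.
by rewrite /logdetE detV det_inv lnV ?posrE // opprK.
Qed.

Lemma continuous_det_Vmix : continuous (fun v : 'rV[R]_n => \det (Vmix (fun k => v 0 k))).
Proof.
apply: continuous_det => i j.
have -> : (fun v : 'rV[R]_n => Vmix (fun k => v 0 k) i j) = fun v =>
    \sum_k ((1 - alpha) * ((a k)^T *m a k) i j) * v 0 k + alpha * Vmat a pioff i j.
  apply/funext => v; rewrite !mxE summxE mulr_sumr; congr (_ + _).
  by apply: eq_bigr => k _; rewrite !mxE; ring.
apply: continuous_addr; apply: continuous_sum => k; apply: continuous_mull.
exact: coord_continuous.
Qed.

End Duality.

Unset Implicit Arguments.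

Theorem lemma5p1 (R : realType) (d n : nat) (a : 'I_n -> 'rV[R]_d)
  (a_inj : injective a)
  (a_span : row_full (\matrix_(i < n) a i))
  (pioff : 'I_n -> R) (pioff_dist : in_simplex [set: 'I_n] pioff)
  (Al : {set 'I_n}) (Al_ne : Al != finset.set0)
  (alpha : R) (alpha_ge0 : 0 <= alpha) (alpha_lt1 : alpha < 1) :
  primal_value a pioff Al alpha = dual_value a pioff Al alpha.
Proof.
apply/eqP; rewrite eq_le dual_value_le_primal_value // andbT.
have unifAl : in_simplex Al (uniform_on Al : 'I_n -> R) := in_simplex_uniform_on Al_ne.
have [det0|detn0] := eqVneq (\det (Vmix a pioff alpha (uniform_on Al))) 0.
  by rewrite primal_value_ninfty // leNye.
have [ps psAl psmax] := @simplex_argmax _ _ Al (fun p => \det (Vmix a pioff alpha p))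
  (@continuous_det_Vmix R d n a pioff alpha) (ex_intro _ _ unifAl).
have detps : 0 < \det (Vmix a pioff alpha ps).
  by apply: lt_le_trans (psmax _ unifAl); rewrite lt_def detn0 Vmix_det_ge0 //; case: unifAl.
apply: le_trans (primal_value_le_logdetE pioff_dist alpha_ge0 alpha_lt1 psAl detps psmax) _.
by apply: ereal_sup_ubound; exists ps.
Qed.
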